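(* Fix an integer base $B\ge 2$. Assume Dickson's conjecture holds. Then for every positive integer $t$ there exists a positive integer $N$ such that $N, N+1, \ldots, N+t-1$ are all economical base $B$.
   Context: For a positive integer $n$, $\delta(n)$ is the number of digits of $n$ in base $B$, i.e. $\delta(n)=k$ iff $B^{k-1}\le n<B^k$. Define $\delta'(1)=0$ and $\delta'(a)=\delta(a)$ for $a>1$. If $n=\prod_{i} p_i^{a_i}$ is the prime power factorisation, set $\phi(n)=\sum_i \big(\delta(p_i)+\delta'(a_i)\big)$ (with $\phi(1)=0$), and $h(n)=\delta(n)-\phi(n)$. $n$ is economical if $h(n)\ge 0$. Dickson's conjecture: for any finite family of linear functions $f_i(x)=a_i x+b_i$ ($i=1,\dots,s$) with integers $a_i\ge1$, $b_i$, if there is no integer $m>1$ dividing $f_1(x)\cdots f_s(x)$ for every integer $x$, then there are infinitely many positive integers $x$ for which $f_1(x),\dots,f_s(x)$ are all prime. *)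

From mathcomp Require Import all_boot all_order all_algebra.
From mathcomp Require Import intdiv.
Set Implicit Arguments. Unset Strict Implicit. Unset Printing Implicit Defensive.
Import Order.TTheory GRing.Theory Num.Theory.

(* delta B n : number of base-B digits of n >= 1, i.e. the k with
   B^(k-1) <= n < B^k.  For B >= 2, n >= 1 this is trunc_log B n + 1. *)
Definition delta (B n : nat) : nat := (trunc_log B n).+1.

Definition delta' (B a : nat) : nat := if a == 1 then 0 else delta B a.

Definition phi (B n : nat) : nat :=
  \sum_(p <- primes n) (delta B p + delta' B (logn p n)).

Definition economical (B n : nat) : Prop := phi B n <= delta B n.

Local Open Scope ring_scope.
Definition lin_eval (f : int * int) (x : int) : int := f.1 * x + f.2.

Definition int_prime (z : int) : Prop := exists2 p : nat, prime p & z = Posz p.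

Definition Dickson_conjecture : Prop :=
  forall fs : seq (int * int),
    all (fun f => 1 <= f.1)%R fs ->
    (~ exists m : int, (1 < m)%R /\
         forall x : int, (m %| \prod_(f <- fs) lin_eval f x)%Z) ->
    forall M : nat, exists x : nat, (M < x)%N /\
      forall f, f \in fs -> int_prime (lin_eval f (Posz x)).

From mathcomp Require Import all_boot all_order all_algebra.
From mathcomp Require Import zify ring.

Set Implicit Arguments.
Unset Strict Implicit.
Unset Printing Implicit Defensive.

(* Write N + i = (i+1) * P_i^E * q_i with distinct primes P_i >= max(B^2, t+1),
   a large exponent E and a prime q_i > (i+1) * P_i^E.  Since P_i >= B^2, the
   factor P_i^E has at least 2E+1 digits, whereas it contributes only
   delta(P_i) + delta'(E) <= delta(P_i) + E to phi; choosing E larger than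
   phi(i+1) + delta(P_i), this surplus pays for the factor i+1 and for the
   single digit lost when the digit counts of P_i^E and q_i are added.
   The congruences N + i = 0 mod (i+1) P_i^E are solved by the Chinese remainder
   theorem; the cofactors q_i are then t linear forms in a free parameter x,
   admissible because each leading coefficient is divisible by t! and coprime
   to the constant term, so Dickson's conjecture makes them all prime. *)

Lemma leq_delta B m n : m <= n -> delta B m <= delta B n.
Proof. by move=> le_mn; rewrite /delta ltnS leq_trunc_log. Qed.

Lemma delta_mul B m n : 1 < B -> 0 < m -> 0 < n ->
  delta B m + delta B n <= (delta B (m * n)).+1.
Proof.
move=> B_gt1 m_gt0 n_gt0; rewrite /delta addSn !ltnS addnS ltnS.
by apply: trunc_log_max => //; rewrite expnD leq_mul ?trunc_logP.
Qed.

Lemma delta'_leq B E : 1 < B -> 0 < E -> delta' B E <= E.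
Proof.
move=> B_gt1 E_gt0; rewrite /delta'; case: eqP => // _.
exact: leq_trans (ltn_expl _ B_gt1) (trunc_logP B_gt1 E_gt0).
Qed.

Lemma double_lt_delta_exp B p E : 1 < B -> B * B <= p -> 2 * E < delta B (p ^ E).
Proof.
move=> B_gt1 le_B2p; rewrite /delta ltnS; apply: trunc_log_max => //.
by rewrite expnM; case: E => // E; rewrite leq_exp2r.
Qed.

Lemma phiM B m n : 0 < m -> 0 < n -> coprime m n ->
  phi B (m * n) = phi B m + phi B n.
Proof.
move=> m_gt0 n_gt0 co_mn; rewrite /phi.
have primesM_cat : perm_eq (primes (m * n)) (primes m ++ primes n).
  apply: uniq_perm; [exact: primes_uniq | | by move=> p; rewrite mem_cat primesM].
  by rewrite cat_uniq !primes_uniq -coprime_has_primes ?co_mn.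
rewrite (perm_big _ primesM_cat) big_cat /=; congr (_ + _).
  apply: eq_big_seq => p; rewrite mem_primes => /and3P[_ _ p_m].
  by rewrite lognM // (logn_coprime (coprime_dvdl p_m co_mn)) addn0.
apply: eq_big_seq => p; rewrite mem_primes => /and3P[_ _ p_n].
by rewrite lognM // (logn_coprime (coprime_dvdl p_n _)) // coprime_sym.
Qed.

Lemma phi_prime B q : prime q -> phi B q = delta B q.
Proof. by move=> q_pr; rewrite /phi primes_prime // big_seq1 logn_prime // eqxx addn0. Qed.

Lemma phi_pfactor B p E : prime p -> 0 < E -> phi B (p ^ E) = delta B p + delta' B E.
Proof. by move=> p_pr E_gt0; rewrite /phi primesX // primes_prime // big_seq1 pfactorK. Qed.

Lemma economical_mul_pfactor_prime B m p E q : 1 < B -> 0 < m -> 0 < E ->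
  prime p -> B * B <= p -> coprime m p -> prime q -> m * p ^ E < q ->
  phi B m + delta B p < E -> economical B (m * p ^ E * q).
Proof.
move=> B_gt1 m_gt0 E_gt0 p_pr le_B2p co_mp q_pr lt_mpq phi_lt.
have pE_gt0 : 0 < p ^ E by rewrite expn_gt0 prime_gt0.
have q_gt0 := prime_gt0 q_pr.
have co_mpq : coprime (m * p ^ E) q.
  by rewrite coprime_sym prime_coprime // gtnNdvd ?muln_gt0 ?m_gt0.
rewrite /economical phiM ?muln_gt0 ?m_gt0 // phiM ?coprime_pexpr //.
rewrite phi_pfactor // (phi_prime B q_pr).
have := delta'_leq B_gt1 E_gt0; have := double_lt_delta_exp E B_gt1 le_B2p.
have := delta_mul B_gt1 pE_gt0 q_gt0.
have : delta B (p ^ E * q) <= delta B (m * p ^ E * q).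
  by rewrite -mulnA leq_delta // leq_pmull.
lia.
Qed.

Lemma linear_root_mod_prime_uniq p a b x y : prime p -> ~~ (p %| a) ->
  x < p -> y < p -> p %| a * x + b -> p %| a * y + b -> x = y.
Proof.
move=> p_pr p_a; wlog le_xy : x y / x <= y.
  move=> hwlog lt_xp lt_yp px py; case/orP: (leq_total x y) => le; first exact: hwlog.
  by symmetry; apply: hwlog.
move=> _ lt_yp px py.
have : p %| a * (y - x) by rewrite mulnBr -(subnDr b) dvdn_sub.
rewrite Euclid_dvdM // (negbTE p_a) /= => p_yx.
apply/eqP; rewrite eqn_leq le_xy /= -subn_eq0; apply: contraLR p_yx.
by rewrite -lt0n => yx_gt0; rewrite gtnNdvd // (leq_ltn_trans (leq_subr x y)).
Qed.

Lemma exists_nonroot_linear_forms t (a b : nat -> nat) p : prime p ->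
  (forall i, i < t -> coprime (a i) (b i)) -> (forall i, i < t -> t`! %| a i) ->
  exists2 x, x <= t & forall i, i < t -> ~~ (p %| a i * x + b i).
Proof.
move=> p_pr co_ab fact_a.
case: (boolP [exists x : 'I_t.+1, [forall i : 'I_t, ~~ (p %| a i * x + b i)]]).
  case/existsP=> x /forallP x_nonroot; exists x; first by rewrite -ltnS.
  by move=> i lt_it; exact: (x_nonroot (Ordinal lt_it)).
rewrite negb_exists => /forallP no_nonroot; exfalso.
have /fin_all_exists[root root_dvd] : forall x : 'I_t.+1, exists i : 'I_t,
    p %| a i * x + b i.
  by move=> x; have /forallPn[i] := no_nonroot x; rewrite negbK; exists i.
suff /leq_card : injective root by rewrite !card_ord ltnn.
move=> x y eq_root; apply: val_inj.
have := root_dvd x; have := root_dvd y; rewrite -eq_root; set i := root x.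
move=> py px; have lt_it := ltn_ord i.
have p_a : ~~ (p %| a i).
  apply/negP => p_a; move: px; rewrite dvdn_addr ?dvdn_mulr // => p_b.
  have : p %| gcdn (a i) (b i) by rewrite dvdn_gcd p_a p_b.
  by rewrite (eqP (co_ab _ lt_it)) Euclid_dvd1.
have lt_tp : t < p.
  rewrite ltnNge; apply: contra p_a => le_pt.
  by apply: dvdn_trans (fact_a _ lt_it); rewrite dvdn_fact // prime_gt0.
exact: linear_root_mod_prime_uniq p_pr p_a (leq_trans (ltn_ord x) lt_tp)
  (leq_trans (ltn_ord y) lt_tp) px py.
Qed.

Lemma Dickson_nat_forms t (a b : nat -> nat) : Dickson_conjecture ->
  (forall i, i < t -> 0 < a i) -> (forall i, i < t -> coprime (a i) (b i)) ->
  (forall i, i < t -> t`! %| a i) ->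
  forall M, exists x, M < x /\ forall i, i < t -> prime (a i * x + b i).
Proof.
move=> Dickson a_gt0 co_ab fact_a M.
pose fs := [seq (Posz (a i), Posz (b i)) | i <- iota 0 t].
have fs_lead : all (fun f => (1 <= f.1)%R) fs.
  by apply/allP => f /mapP[i]; rewrite mem_iota => lt_it ->; rewrite /= lez_nat a_gt0.
have prod_fs (x : nat) : (\prod_(f <- fs) lin_eval f x)%R
    = Posz (\prod_(i <- iota 0 t) (a i * x + b i)).
  rewrite big_map (big_morph Posz PoszM (erefl _)).
  by apply: eq_bigr => i _; rewrite /lin_eval /= PoszD PoszM.
have fs_admissible : ~ exists m : int, (1 < m)%R /\
    forall x : int, (m %| (\prod_(f <- fs) lin_eval f x)%R)%Z.
  case=> -[n|n] [] // n_gt1 n_dvd; rewrite ltz_nat in n_gt1.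
  have [x _ x_nonroot] := exists_nonroot_linear_forms (pdiv_prime n_gt1) co_ab fact_a.
  have := dvdn_trans (pdiv_dvd n) (n_dvd x); rewrite prod_fs.
  rewrite Euclid_dvd_prod ?pdiv_prime // big_has => /hasP[i].
  by rewrite mem_iota => /andP[_ lt_it]; apply/negP/x_nonroot.
have [x [lt_Mx fs_prime]] := Dickson fs fs_lead fs_admissible M.
exists x; split => // i lt_it.
have /fs_prime[q q_pr] : (Posz (a i), Posz (b i)) \in fs.
  by apply: map_f; rewrite mem_iota.
by rewrite /lin_eval /= -PoszM -PoszD => -[->].
Qed.

Lemma coprime_prodl (I : Type) (r : seq I) (P : pred I) (F : I -> nat) n :
  (forall i, P i -> coprime (F i) n) -> coprime (\prod_(i <- r | P i) F i) n.
Proof.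
move=> co_F; apply: (big_ind (fun y => coprime y n)) => //; first exact: coprime1n.
by move=> x y co_x co_y; rewrite coprimeMl co_x co_y.
Qed.

Lemma chinese_linear n (m d : nat -> nat) :
  (forall i, i < n -> 0 < m i) ->
  (forall i j, i < n -> j < n -> i != j -> coprime (m i) (m j)) ->
  (forall i, i < n -> coprime (d i) (m i)) ->
  exists k, forall i, i < n -> m i %| 1 + d i * k.
Proof.
elim: n => [|n IHn] m_gt0 co_m co_dm; first by exists 0.
have [k k_sol] : exists k, forall i, i < n -> m i %| 1 + d i * k.
  apply: IHn => [i lt_in | i j lt_in lt_jn | i lt_in].
  - exact: m_gt0 (ltnW lt_in).
  - exact: co_m (ltnW lt_in) (ltnW lt_jn).
  - exact: co_dm (ltnW lt_in).
pose Mp := \prod_(j < n) m j.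
have co_dMp : coprime (d n * Mp) (m n).
  rewrite coprimeMl co_dm //= coprime_prodl // => j _.
  by apply: co_m; [exact: ltnW (ltn_ord j) | | rewrite neq_ltn ltn_ord].
(* Shift k by a multiple of Mp, which keeps the first n congruences; the Bezout
   coefficient u of d n * Mp modulo m n makes the last one hold. *)
have [u _ dvd_u] := Bezoutl (d n * Mp) (m_gt0 n (ltnSn n)).
rewrite gcdnC (eqP co_dMp) in dvd_u.
exists (k + Mp * (u * (1 + d n * k))) => i.
rewrite ltnS leq_eqVlt => /predU1P[-> | lt_in].
  rewrite (_ : 1 + d n * _ = (1 + d n * k) * (1 + u * (d n * Mp))); last by ring.
  exact: dvdn_mull.
rewrite (_ : 1 + d i * _ = (1 + d i * k) + Mp * (d i * u * (1 + d n * k))); last by ring.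
by rewrite dvdn_add ?k_sol // dvdn_mulr // /Mp (bigD1 (Ordinal lt_in)) //= dvdn_mulr.
Qed.

Lemma coprime_dvd_shifts N n i j c d : coprime c n`! -> i != j -> i <= n -> j <= n ->
  c %| N + i -> d %| N + j -> coprime c d.
Proof.
move=> co_c_fact neq_ij le_in le_jn c_dvd d_dvd.
set g := gcdn c d.
have g_Ni : g %| N + i := dvdn_trans (dvdn_gcdl c d) c_dvd.
have g_Nj : g %| N + j := dvdn_trans (dvdn_gcdr c d) d_dvd.
have g_dist : g %| (i - j) + (j - i) by rewrite dvdn_add // -(subnDl N) dvdn_sub.
have g_fact : g %| n`!.
  by apply: dvdn_trans g_dist (dvdn_fact _); move: neq_ij le_in le_jn; clear; lia.
have : g %| gcdn c n`! by rewrite dvdn_gcd dvdn_gcdl g_fact.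
by rewrite (eqP co_c_fact) dvdn1.
Qed.

Section ConsecutivePattern.

Variables (t : nat) (m : nat -> nat).
Hypothesis m_gt0 : forall i, i < t -> 0 < m i.
Hypothesis m_coprime : forall i j, i < t -> j < t -> i != j -> coprime (m i) (m j).
Hypothesis m_coprime_fact : forall i, i < t -> coprime (m i) t`!.

Local Notation F := t`!.
Let D i := F * (F %/ i.+1).

Let mul_D i : i < t -> i.+1 * D i = F * F.
Proof. by move=> lt_it; rewrite mulnCA [i.+1 * _]mulnC divnK ?dvdn_fact. Qed.

Let D_coprime i : i < t -> coprime (D i) (m i).
Proof.
move=> lt_it; have co_F : coprime F (m i) by rewrite coprime_sym m_coprime_fact.
have i1_F : i.+1 %| F by apply: dvdn_fact.
by rewrite coprimeMl co_F (coprime_dvdl (dvdn_div i1_F)).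
Qed.

Section WithSolution.

Variable k : nat.
Hypothesis k_sol : forall i, i < t -> m i %| 1 + D i * k.

(* The N we look for are N0 + 1 + C * x, for which
   N + i = i.+1 * m i * (a i * x + b i). *)
Let N0 := F * F * k.
Let C := F * F * \prod_(j < t) m j.
Let a i := D i * \prod_(j < t | j != i :> nat) m j.
Let b i := (1 + D i * k) %/ m i.

Let mul_b i : i < t -> i.+1 * m i * b i = N0 + i.+1.
Proof.
move=> lt_it; rewrite -mulnA [m i * _]mulnC divnK ?k_sol //.
by rewrite mulnDr muln1 mulnA mul_D // addnC.
Qed.

Let mul_a i (lt_it : i < t) : i.+1 * m i * a i = C.
Proof.
rewrite /C (bigD1 (Ordinal lt_it)) //= -(mul_D lt_it) /a.
have -> : \prod_(j < t | j != Ordinal lt_it) m j = \prod_(j < t | j != i :> nat) m j.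
  exact: eq_bigl.
ring.
Qed.

Let a_gt0 i : i < t -> 0 < a i.
Proof.
move=> lt_it; have : 0 < C.
  by rewrite !muln_gt0 fact_gt0 prodn_gt0 // => j; apply: m_gt0.
by rewrite -(mul_a lt_it) muln_gt0 => /andP[_].
Qed.

Let fact_dvd_a i : i < t -> F %| a i.
Proof. by move=> _; rewrite /a /D -mulnA dvdn_mulr. Qed.

Let coprime_ab i : i < t -> coprime (a i) (b i).
Proof.
move=> lt_it; rewrite coprimeMl; apply/andP; split.
  apply: coprime_dvdr (dvdn_div (k_sol lt_it)) _.
  by rewrite /coprime addnC [D i * k]mulnC gcdnMDl gcdn1.
apply: coprime_prodl => j neq_ji.
apply: (@coprime_dvd_shifts N0 t j.+1 i.+1) => //; first exact: m_coprime_fact.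
- by rewrite -(mul_b (ltn_ord j)) -mulnA dvdn_mull ?dvdn_mulr.
- by rewrite -(mul_b lt_it) dvdn_mull.
Qed.

Lemma consecutive_pattern_of_solution : Dickson_conjecture ->
  exists N, 0 < N /\ forall i, i < t ->
    exists q, [/\ prime q, i.+1 * m i < q & N + i = i.+1 * m i * q].
Proof.
move=> Dickson.
have [x [lt_Cx ab_prime]] := Dickson_nat_forms Dickson a_gt0 coprime_ab fact_dvd_a C.
exists (C * x + N0 + 1); split; first by rewrite addn1.
move=> i lt_it; exists (a i * x + b i); split; first exact: ab_prime.
  rewrite -(mul_a lt_it) in lt_Cx.
  apply: leq_ltn_trans (leq_pmulr _ (a_gt0 lt_it)) (leq_trans lt_Cx _).
  exact: leq_trans (leq_pmull x (a_gt0 lt_it)) (leq_addr _ _).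
rewrite mulnDr mulnA (mul_a lt_it) (mul_b lt_it); lia.
Qed.

End WithSolution.

Lemma Dickson_consecutive_pattern : Dickson_conjecture ->
  exists N, 0 < N /\ forall i, i < t ->
    exists q, [/\ prime q, i.+1 * m i < q & N + i = i.+1 * m i * q].
Proof.
have [k k_sol] := chinese_linear m_gt0 m_coprime D_coprime.
exact: consecutive_pattern_of_solution k_sol.
Qed.

End ConsecutivePattern.

Lemma prime_coprime_fact p n : prime p -> n < p -> coprime p n`!.
Proof.
move=> p_pr; elim: n => [|n IHn] lt_np; first exact: coprimen1.
by rewrite factS coprimeMr (IHn (ltnW lt_np)) prime_coprime // gtnNdvd.
Qed.

Lemma exists_distinct_primes_above Q :
  exists P : nat -> nat, [/\ forall i, prime (P i), forall i, Q < P i & injective P].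
Proof.
pose next p := sval (prime_above p).
have next_gt p : p < next p by rewrite /next; case: prime_above.
have next_prime p : prime (next p) by rewrite /next; case: prime_above.
pose P i := iter i.+1 next Q.
have P_incr : {homo P : i j / i < j} := homo_ltn ltn_trans (fun i => next_gt (P i)).
exists P; split => [i | i | ]; first exact: next_prime.
  exact: leq_trans (next_gt Q) (ltnW_homo P_incr (leq0n i)).
exact: incn_inj (leq_mono P_incr).
Qed.

Theorem mainTheorem6 (B : nat) (hB : 2 <= B) :
  Dickson_conjecture ->
  forall t : nat, 0 < t ->
  exists N : nat, 0 < N /\ forall i : nat, i < t -> economical B (N + i).
Proof.
move=> Dickson t _.
have [P [P_prime P_gt P_inj]] := exists_distinct_primes_above (t + B * B).
have P_gt_t i : t < P i := leq_ltn_trans (leq_addr _ _) (P_gt i).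
have le_B2P i : B * B <= P i := ltnW (leq_ltn_trans (leq_addl _ _) (P_gt i)).
pose E := (\sum_(i < t) (phi B i.+1 + delta B (P i))).+1.
have PE_gt0 i : i < t -> 0 < P i ^ E by rewrite expn_gt0 prime_gt0.
have PE_coprime i j : i < t -> j < t -> i != j -> coprime (P i ^ E) (P j ^ E).
  move=> _ _ neq_ij; rewrite coprime_pexpl // coprime_pexpr //.
  by rewrite prime_coprime // dvdn_prime2 // (inj_eq P_inj).
have PE_coprime_fact i : i < t -> coprime (P i ^ E) t`!.
  by rewrite coprime_pexpl // prime_coprime_fact.
have [N [N_gt0 N_pattern]] :=
  Dickson_consecutive_pattern PE_gt0 PE_coprime PE_coprime_fact Dickson.
exists N; split => // i lt_it.
have [q [q_prime q_big ->]] := N_pattern i lt_it.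
apply: economical_mul_pfactor_prime => //.
  by rewrite coprime_sym prime_coprime // gtnNdvd // (leq_ltn_trans lt_it).
by rewrite ltnS (bigD1 (Ordinal lt_it)) //= leq_addr.
Qed.
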